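(* Let $\mathbb{F}\in\{\mathbb{R},\mathbb{C}\}$, $A\in\mathbb{F}^{m\times n}$ with $\|A\|_{\infty,col}\le1$, $\mu>0$, $x_0\in\mathbb{F}^n$ with $S=\mathrm{supp}\,x_0$ and $\mathrm{card}(x_0)=K$, $\epsilon\in\mathbb{F}^m$ and $b=Ax_0+\epsilon$. Let $N\ge2K$ with $\beta_N>0$, and assume $\|\epsilon\|_2<\beta_N^2\sqrt{\mu}$ and $$|x_{0,j}|>\Big(\frac{1}{\beta_N^2}+1\Big)\sqrt{\mu}\quad\text{for all }j\in S.$$ Then the oracle solution $x'=x_S$ is the unique global minimizer of $\mathcal{K}_{reg}$ as well as of $\mathcal{K}$, it satisfies $\mathrm{supp}\,x'=\mathrm{supp}\,x_0$ and $\|x'-x_0\|_2\le\|\epsilon\|_2/\beta_K$, and every stationary point $x''\neq x'$ of $\mathcal{K}_{reg}$ satisfies $\mathrm{card}(x'')>N-K$.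
   Context: $\|A\|_{\infty,col}=\max_i\|a_i\|_2$ over the columns $a_i$ of $A$. $\mathrm{card}(x)$ is the number of nonzero entries; $\beta_k=\inf\{\|Ax\|_2/\|x\|_2:x\ne0,\ \mathrm{card}(x)\le k\}$. $\mathcal{K}(x)=\mu\,\mathrm{card}(x)+\|Ax-b\|_2^2$ and $\mathcal{K}_{reg}(x)=\mathcal{Q}_2(\mu\,\mathrm{card})(x)+\|Ax-b\|_2^2$ with $\mathcal{Q}_2(\mu\,\mathrm{card})(x)=\sum_{j=1}^n\big(\mu-(\max\{\sqrt{\mu}-|x_j|,0\})^2\big)$. $A_S$ denotes $A$ with all columns with index outside $S$ set to zero; the oracle solution is $x_S=(A_S^*A_S)^\dagger A_S^*b$ ($\dagger$ Moore–Penrose inverse, $A^*$ conjugate transpose). A stationary point of a function $g$ is a point $x$ with $0$ in the Fréchet subdifferential $\hat\partial g(x)$, i.e. the set of $v$ with $\liminf_{y\to x,y\ne x}(g(y)-g(x)-\mathrm{Re}\langle v,y-x\rangle)/\|y-x\|\ge0$. *)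

From HB Require Import structures.
From mathcomp Require Import all_boot all_order all_algebra.
From mathcomp Require Import complex.
From mathcomp Require Import all_classical all_reals.
Set Implicit Arguments. Unset Strict Implicit. Unset Printing Implicit Defensive.
Import Order.TTheory GRing.Theory Num.Theory.
Local Open Scope ring_scope.

Section Defs.
Variable R : realType.
Local Notation C := (complex R).

(* Scalar field selector: realF = true means F = R (entries with zero
   imaginary part), realF = false means F = C. *)
Definition inF (realF : bool) (z : C) : Prop := if realF then complex.Im z = 0 else True.
Definition vecF (realF : bool) {n : nat} (x : 'cV[C]_n) : Prop :=
  forall i, inF realF (x i 0).
Definition matF (realF : bool) {m n : nat} (A : 'M[C]_(m, n)) : Prop :=
  forall i j, inF realF (A i j).

Definition cabs (z : C) : R := Num.sqrt (complex.Re z ^+ 2 + complex.Im z ^+ 2).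
Definition norm2 {n : nat} (x : 'cV[C]_n) : R :=
  Num.sqrt (\sum_(i < n) cabs (x i 0) ^+ 2).
Definition reip {n : nat} (v w : 'cV[C]_n) : R :=
  complex.Re (\sum_(i < n) (conjc (v i 0)) * w i 0).

Definition supp {n : nat} (x : 'cV[C]_n) : {set 'I_n} := [set i | x i 0 != 0].
Definition cardv {n : nat} (x : 'cV[C]_n) : nat := #|supp x|.

Definition colnorm {m n : nat} (A : 'M[C]_(m, n)) : R :=
  \big[Num.max/0]_(j < n) norm2 (col j A).

Definition beta (realF : bool) {m n : nat} (A : 'M[C]_(m, n)) (k : nat) : R :=
  inf [set t : R | exists x : 'cV[C]_n,
        [/\ vecF realF x, x != 0, (cardv x <= k)%N & t = norm2 (A *m x) / norm2 x]].

Definition Kfun {m n : nat} (A : 'M[C]_(m, n)) (b : 'cV[C]_m) (mu : R)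
  (x : 'cV[C]_n) : R :=
  mu * (cardv x)%:R + norm2 (A *m x - b) ^+ 2.
Definition Q2card {n : nat} (mu : R) (x : 'cV[C]_n) : R :=
  \sum_(j < n) (mu - (Num.max (Num.sqrt mu - cabs (x j 0)) 0) ^+ 2).
Definition Kreg {m n : nat} (A : 'M[C]_(m, n)) (b : 'cV[C]_m) (mu : R)
  (x : 'cV[C]_n) : R :=
  Q2card mu x + norm2 (A *m x - b) ^+ 2.

Definition restrict_cols {m n : nat} (A : 'M[C]_(m, n)) (S : {set 'I_n}) :
  'M[C]_(m, n) := \matrix_(i, j) (if j \in S then A i j else 0).
Definition adjoint {m n : nat} (A : 'M[C]_(m, n)) : 'M[C]_(n, m) :=
  map_mx (@conjc R) A^T.

Definition is_MP_inverse {m n : nat} (M : 'M[C]_(m, n)) (X : 'M[C]_(n, m)) : Prop :=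
  [/\ M *m X *m M = M, X *m M *m X = X,
      adjoint (M *m X) = M *m X & adjoint (X *m M) = X *m M].

Definition unique_global_minimizer (realF : bool) {n : nat}
  (g : 'cV[C]_n -> R) (x : 'cV[C]_n) : Prop :=
  vecF realF x /\ forall y, vecF realF y -> y <> x -> g x < g y.

(* Frechet subdifferential over F^n: v such that
   liminf_{y -> x, y <> x} (g y - g x - Re<v, y - x>)/||y - x|| >= 0,
   written out with epsilon/delta. *)
Definition frechet_subdiff (realF : bool) {n : nat} (g : 'cV[C]_n -> R)
  (x v : 'cV[C]_n) : Prop :=
  vecF realF v /\
  forall eps : R, 0 < eps -> exists2 delta : R, 0 < delta &
    forall y : 'cV[C]_n, vecF realF y -> 0 < norm2 (y - x) < delta ->
      - eps <= (g y - g x - reip v (y - x)) / norm2 (y - x).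

Definition stationary (realF : bool) {n : nat} (g : 'cV[C]_n -> R)
  (x : 'cV[C]_n) : Prop :=
  vecF realF x /\ frechet_subdiff realF g x 0.

End Defs.

From HB Require Import structures.
From mathcomp Require Import all_boot all_order all_algebra.
From mathcomp Require Import complex.
From mathcomp Require Import all_classical all_reals.
From mathcomp Require Import ring lra.
Import Order.TTheory GRing.Theory Num.Theory.
Local Open Scope ring_scope.
Local Open Scope complex_scope.
Set Implicit Arguments. Unset Strict Implicit. Unset Printing Implicit Defensive.

(** Let [xS] be the oracle solution and [r = b - A xS] its residual.  By the
    normal equations [r] is orthogonal to the columns indexed by [S], so
    [eps = r + A (xS - x0)] is an orthogonal splitting; the restricted isometry
    bound then gives [beta_N |xS - x0| <= |eps|], so every entry of [xS] on [S]
    has modulus above [sqrt mu] and [Kreg xS = K xS].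

    For [y <> xS] with [card y <= K], the vector [y - xS] is [N]-sparse and
    [K y - K xS] splits into positive coordinatewise terms ([Kgap]); if
    [card y > K] the penalty alone wins because [|r|^2 < mu].  Moving one
    coordinate of modulus in ]0, sqrt mu[ to 0 or to modulus [sqrt mu] along its
    direction, the penalty is concave and the data term has curvature at most
    [mu] (columns of norm at most 1), so [Kreg] is concave on that segment;
    induction on the number of such coordinates reduces [Kreg] to [K].

    Finally, if [card y <= N - K] then [y - xS] is again [N]-sparse, and the
    one-sided slope of [Kreg] from [y] towards [xS] is bounded by a sum of
    negative coordinatewise terms ([Kslope]), contradicting Frechet
    stationarity. *)

Section ComplexModulus.
Variable R : realType.
Local Notation C := (complex R).
Local Notation Re := (@complex.Re R).

Lemma cabs_normc (z : C) : cabs z = Normc.normc z.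
Proof. by case: z. Qed.

Lemma cabs_ge0 (z : C) : 0 <= cabs z.
Proof. exact: sqrtr_ge0. Qed.

Lemma cabs0 : cabs (0 : C) = 0.
Proof. by rewrite /cabs /= expr0n /= addr0 sqrtr0. Qed.

Lemma cabs_eq0 (z : C) : (cabs z == 0) = (z == 0).
Proof.
apply/eqP/eqP => [|->]; last exact: cabs0.
by rewrite cabs_normc => /Normc.eq0_normc.
Qed.

Lemma cabs_gt0 (z : C) : (0 < cabs z) = (z != 0).
Proof. by rewrite lt_def cabs_eq0 cabs_ge0 andbT. Qed.

Lemma cabsM (z w : C) : cabs (z * w) = cabs z * cabs w.
Proof. by rewrite !cabs_normc Normc.normcM. Qed.

Lemma ler_cabsD (z w : C) : cabs (z + w) <= cabs z + cabs w.
Proof. by rewrite !cabs_normc le_normcD. Qed.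

Lemma cabsN (z : C) : cabs (- z) = cabs z.
Proof. by rewrite !cabs_normc normcN. Qed.

Lemma cabs_real (t : R) : cabs t%:C = `|t|.
Proof. by rewrite /cabs /= expr0n /= addr0 sqrtr_sqr. Qed.

Lemma ReD (z w : C) : Re (z + w) = Re z + Re w.
Proof. by case: z; case: w. Qed.

Lemma ImD (z w : C) : complex.Im (z + w) = complex.Im z + complex.Im w.
Proof. by case: z; case: w. Qed.

Lemma Re_sum (I : Type) (r : seq I) (P : pred I) (F : I -> C) :
  Re (\sum_(i <- r | P i) F i) = \sum_(i <- r | P i) Re (F i).
Proof. exact: (big_morph _ ReD). Qed.

Lemma Re_conjM (z w : C) :
  Re (z^* * w) = Re z * Re w + complex.Im z * complex.Im w.
Proof. by case: z => a b; case: w => c d /=; ring. Qed.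

Lemma Re_conjMC (z w : C) : Re (z^* * w) = Re (w^* * z).
Proof. by rewrite !Re_conjM mulrC [complex.Im w * _]mulrC. Qed.

Lemma Re_conjMxx (z : C) : Re (z^* * z) = cabs z ^+ 2.
Proof. by rewrite Re_conjM sqr_sqrtr ?addr_ge0 ?sqr_ge0 // !expr2. Qed.

Lemma cabs_convex (u v : C) (t : R) : 0 <= t <= 1 ->
  cabs (u - t%:C * (u - v)) <= (1 - t) * cabs u + t * cabs v.
Proof.
case/andP => t0 t1.
have -> : u - t%:C * (u - v) = (1 - t)%:C * u + t%:C * v.
  by rewrite rmorphB rmorph1 /=; ring.
apply: le_trans (ler_cabsD _ _) _.
by rewrite !cabsM !cabs_real !ger0_norm // subr_ge0.
Qed.

End ComplexModulus.

Section Hilbert.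
Variable R : realType.
Local Notation C := (complex R).
Local Notation Re := (@complex.Re R).

Definition sqnorm2 {n : nat} (x : 'cV[C]_n) : R := \sum_(i < n) cabs (x i 0) ^+ 2.

Lemma sqnorm2_ge0 n (x : 'cV[C]_n) : 0 <= sqnorm2 x.
Proof. by apply: sumr_ge0 => i _; apply: sqr_ge0. Qed.

Lemma norm2_ge0 n (x : 'cV[C]_n) : 0 <= norm2 x.
Proof. exact: sqrtr_ge0. Qed.

Lemma norm2E n (x : 'cV[C]_n) : norm2 x = Num.sqrt (sqnorm2 x).
Proof. by []. Qed.

Lemma sqr_norm2 n (x : 'cV[C]_n) : norm2 x ^+ 2 = sqnorm2 x.
Proof. by rewrite sqr_sqrtr // sqnorm2_ge0. Qed.

Lemma sqnorm2_eq0 n (x : 'cV[C]_n) : sqnorm2 x = 0 -> x = 0.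
Proof.
move/eqP; rewrite psumr_eq0 => [/allP x0|i _]; last exact: sqr_ge0.
apply/matrixP => i j; rewrite (ord1 j) mxE.
by apply/eqP; rewrite -cabs_eq0 -sqrf_eq0; apply: x0; rewrite mem_index_enum.
Qed.

Lemma norm2_eq0 n (x : 'cV[C]_n) : (norm2 x == 0) = (x == 0).
Proof.
apply/eqP/eqP => [x0|->]; first by apply: sqnorm2_eq0; rewrite -sqr_norm2 x0 expr0n.
by rewrite /norm2 big1 ?sqrtr0 // => i _; rewrite mxE cabs0 expr0n.
Qed.

Lemma norm2_gt0 n (x : 'cV[C]_n) : (0 < norm2 x) = (x != 0).
Proof. by rewrite lt_def norm2_eq0 norm2_ge0 andbT. Qed.

Lemma norm20 n : norm2 (0 : 'cV[C]_n) = 0.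
Proof. by apply/eqP; rewrite norm2_eq0. Qed.

Lemma cabs_le_norm2 n (x : 'cV[C]_n) i : cabs (x i 0) <= norm2 x.
Proof.
rewrite -(ler_pXn2r (_ : (0 < 2)%N)) ?nnegrE ?cabs_ge0 ?norm2_ge0 //.
rewrite sqr_norm2 /sqnorm2 (bigD1 i) //= lerDl.
by apply: sumr_ge0 => k _; apply: sqr_ge0.
Qed.

Lemma reipE n (v w : 'cV[C]_n) : reip v w = \sum_i Re ((v i 0)^* * w i 0).
Proof. by rewrite /reip Re_sum. Qed.

Lemma reipxx n (x : 'cV[C]_n) : reip x x = sqnorm2 x.
Proof. by rewrite reipE; apply: eq_bigr => i _; rewrite Re_conjMxx. Qed.

Lemma reipC n (v w : 'cV[C]_n) : reip v w = reip w v.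
Proof. by rewrite !reipE; apply: eq_bigr => i _; rewrite Re_conjMC. Qed.

Lemma reipDr n (u v w : 'cV[C]_n) : reip u (v + w) = reip u v + reip u w.
Proof. by rewrite !reipE -big_split; apply: eq_bigr => i _; rewrite !mxE mulrDr ReD. Qed.

Lemma reipDl n (u v w : 'cV[C]_n) : reip (v + w) u = reip v u + reip w u.
Proof. by rewrite reipC reipDr !(reipC u). Qed.

Lemma reipZr n (k : R) (v w : 'cV[C]_n) : reip v (k%:C *: w) = k * reip v w.
Proof.
rewrite !reipE mulr_sumr; apply: eq_bigr => i _; rewrite !mxE.
by case: (v i 0) => a b; case: (w i 0) => c d /=; ring.
Qed.

Lemma reipNr n (v w : 'cV[C]_n) : reip v (- w) = - reip v w.
Proof.
have -> : - w = (-1)%:C *: w by rewrite rmorphN rmorph1 scaleN1r.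
by rewrite reipZr mulN1r.
Qed.

Lemma reipBr n (u v w : 'cV[C]_n) : reip u (v - w) = reip u v - reip u w.
Proof. by rewrite reipDr reipNr. Qed.

Lemma reipBl n (u v w : 'cV[C]_n) : reip (v - w) u = reip v u - reip w u.
Proof. by rewrite reipC reipBr !(reipC u). Qed.

Lemma reip0l n (v : 'cV[C]_n) : reip 0 v = 0.
Proof. by rewrite reipE big1 // => i _; rewrite mxE rmorph0 mul0r. Qed.

Lemma sqnorm2D n (v w : 'cV[C]_n) :
  sqnorm2 (v + w) = sqnorm2 v + 2 * reip v w + sqnorm2 w.
Proof. by rewrite -!reipxx !reipDl !reipDr (reipC w v); ring. Qed.

Lemma sqnorm2B n (v w : 'cV[C]_n) :
  sqnorm2 (v - w) = sqnorm2 v - 2 * reip v w + sqnorm2 w.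
Proof. by rewrite -!reipxx !reipBr !reipBl (reipC w v); ring. Qed.

Lemma sqnorm2Z n (k : C) (v : 'cV[C]_n) : sqnorm2 (k *: v) = cabs k ^+ 2 * sqnorm2 v.
Proof. by rewrite /sqnorm2 mulr_sumr; apply: eq_bigr => i _; rewrite mxE cabsM exprMn. Qed.

Lemma sqnorm2N n (v : 'cV[C]_n) : sqnorm2 (- v) = sqnorm2 v.
Proof. by rewrite -scaleN1r sqnorm2Z cabsN cabs_real normr1 expr1n mul1r. Qed.

Lemma sqnorm2_DZ n (p q : 'cV[C]_n) (l : R) :
  sqnorm2 (p + l%:C *: q) = sqnorm2 p + 2 * l * reip p q + l ^+ 2 * sqnorm2 q.
Proof. by rewrite sqnorm2D reipZr sqnorm2Z cabs_real real_normK ?num_real // mulrA. Qed.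

Lemma norm2Z n (k : R) (x : 'cV[C]_n) : norm2 (k%:C *: x) = `|k| * norm2 x.
Proof. by rewrite !norm2E sqnorm2Z cabs_real sqrtrM ?sqr_ge0 // sqrtr_sqr normr_id. Qed.

Lemma reip_le_norm2 n (v w : 'cV[C]_n) : reip v w <= norm2 v * norm2 w.
Proof.
have [->|v0] := eqVneq v 0; first by rewrite reip0l norm20 mul0r.
have [->|w0] := eqVneq w 0; first by rewrite reipC reip0l norm20 mulr0.
set a := norm2 v; set b := norm2 w.
have a0 : 0 < a by rewrite norm2_gt0.
have b0 : 0 < b by rewrite norm2_gt0.
have := sqnorm2_ge0 (b%:C *: v - a%:C *: w).
rewrite sqnorm2B !sqnorm2Z reipZr reipC reipZr (reipC w) !cabs_real.
rewrite !ger0_norm ?(ltW a0) ?(ltW b0) // -!sqr_norm2 -/a -/b => H.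
have : 0 <= 2 * (a * b) * (a * b - reip v w) by nra.
by rewrite pmulr_rge0 ?subr_ge0 // !mulr_gt0.
Qed.

End Hilbert.

Section Adjoint.
Variable R : realType.
Local Notation C := (complex R).
Local Notation Re := (@complex.Re R).

Lemma adjointE m n (A : 'M[C]_(m, n)) i j : adjoint A i j = (A j i)^*.
Proof. by rewrite !mxE. Qed.

Lemma adjointM m n p (A : 'M[C]_(m, n)) (B : 'M[C]_(n, p)) :
  adjoint (A *m B) = adjoint B *m adjoint A.
Proof. by rewrite /adjoint trmx_mul map_mxM. Qed.

Lemma adjointK m n (A : 'M[C]_(m, n)) : adjoint (adjoint A) = A.
Proof. by apply/matrixP => i j; rewrite !mxE conjcK. Qed.

Lemma adjointB m n (A B : 'M[C]_(m, n)) : adjoint (A - B) = adjoint A - adjoint B.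
Proof. by apply/matrixP => i j; rewrite !mxE rmorphB. Qed.

Lemma adjoint1 n : adjoint (1%:M : 'M[C]_n) = 1%:M.
Proof. by apply/matrixP => i j; rewrite !mxE rmorphMn rmorph1 eq_sym. Qed.

Lemma reip_adjoint m n (A : 'M[C]_(m, n)) (z : 'cV[C]_n) (r : 'cV[C]_m) :
  reip (A *m z) r = reip z (adjoint A *m r).
Proof.
rewrite /reip; congr Re.
under eq_bigr => i _ do rewrite mxE rmorph_sum mulr_suml.
rewrite exchange_big /=; apply: eq_bigr => j _.
rewrite mxE mulr_sumr; apply: eq_bigr => i _.
by rewrite adjointE rmorphM mulrA [_^* * _]mulrC.
Qed.

Lemma mulmx_adjoint_eq0 m n (B : 'M[C]_(m, n)) : B *m adjoint B = 0 -> B = 0.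
Proof.
move=> BB0; apply/matrixP => i k; rewrite mxE.
have : Re ((B *m adjoint B) i i) = 0 by rewrite BB0 mxE.
rewrite mxE Re_sum.
under eq_bigr => j _ do rewrite adjointE mulrC Re_conjMxx.
move/eqP; rewrite psumr_eq0 => [/allP B0|j _]; last exact: sqr_ge0.
by apply/eqP; rewrite -cabs_eq0 -sqrf_eq0; apply: B0; rewrite mem_index_enum.
Qed.

Lemma MP_inverse_unique n (M X Y : 'M[C]_n) : adjoint M = M ->
  is_MP_inverse M X -> is_MP_inverse M Y -> X = Y.
Proof.
move=> hM [X1 X2 X3 X4] [Y1 Y2 Y3 Y4].
have XM : adjoint X *m M = M *m X by rewrite -X3 adjointM hM.
have YM : adjoint Y *m M = M *m Y by rewrite -Y3 adjointM hM.
have MX : M *m adjoint X = X *m M by rewrite -X4 adjointM hM.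
have MY : M *m adjoint Y = Y *m M by rewrite -Y4 adjointM hM.
have MYM : M = M *m adjoint Y *m M by rewrite -{1}hM -{1}Y1 !adjointM hM mulmxA.
have MXM : M = M *m adjoint X *m M by rewrite -{1}hM -{1}X1 !adjointM hM mulmxA.
have eX : X = X *m M *m Y.
  transitivity (X *m (adjoint X *m (M *m adjoint Y *m M))).
    by rewrite -MYM XM mulmxA X2.
  rewrite !mulmxA -[X *m adjoint X *m M]mulmxA XM.
  by rewrite -[X *m (M *m X) *m adjoint Y *m M]mulmxA YM !mulmxA X2.
have eY : Y = X *m M *m Y.
  transitivity ((M *m adjoint X *m M) *m adjoint Y *m Y).
    by rewrite -MXM -{1}Y2 -Y4 adjointM hM.
  rewrite -[M *m adjoint X *m M *m adjoint Y]mulmxA MY MX.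
  by rewrite -!mulmxA [Y *m (M *m Y)]mulmxA Y2 !mulmxA.
by rewrite eX -eY.
Qed.

Section NormalEquation.
Variables (m n : nat) (B : 'M[C]_(m, n)) (X : 'M[C]_n).
Hypothesis hX : is_MP_inverse (adjoint B *m B) X.

Lemma adjoint_gram : adjoint (adjoint B *m B) = adjoint B *m B.
Proof. by rewrite adjointM adjointK. Qed.

Lemma MP_solution_range (b : 'cV[C]_m) :
  X *m adjoint B *m b = adjoint B *m (B *m (adjoint X *m (X *m (adjoint B *m b)))).
Proof.
case: hX => _ X2 _ X4.
have eX : X = adjoint B *m B *m adjoint X *m X.
  by rewrite -{1}X2 -{1}X4 adjointM adjoint_gram.
by rewrite {1}eX !mulmxA.
Qed.

Lemma MP_normal_equation (b : 'cV[C]_m) :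
  adjoint B *m B *m (X *m adjoint B *m b) = adjoint B *m b.
Proof.
case: hX => X1 _ X3 _.
set M := adjoint B *m B; set D := (1%:M - M *m X) *m adjoint B.
(* [D D^* = 0] because [M X] is a Hermitian projection fixing the range of [M] *)
have DD0 : D *m adjoint D = 0.
  rewrite /D adjointM adjointK adjointB adjoint1 X3.
  rewrite mulmxA -[(1%:M - M *m X) *m adjoint B *m B]mulmxA -/M.
  by rewrite mulmxBl mul1mx X1 subrr mul0mx.
have : D *m b = 0 by rewrite (mulmx_adjoint_eq0 DD0) mul0mx.
rewrite /D !mulmxBl mul1mx => /eqP; rewrite subr_eq0 => /eqP e.
by rewrite [in RHS]e !mulmxA.
Qed.

End NormalEquation.

End Adjoint.

Section Realness.
Variable R : realType.
Local Notation C := (complex R).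

Definition mxconj m n (A : 'M[C]_(m, n)) := map_mx (@conjc R) A.

Lemma mxconjM m n p (A : 'M[C]_(m, n)) (B : 'M[C]_(n, p)) :
  mxconj (A *m B) = mxconj A *m mxconj B.
Proof. exact: map_mxM. Qed.

Lemma mxconj_adjoint m n (A : 'M[C]_(m, n)) : mxconj (adjoint A) = adjoint (mxconj A).
Proof. by apply/matrixP => i j; rewrite !mxE. Qed.

Lemma MP_inverse_mxconj n (M X : 'M[C]_n) :
  is_MP_inverse M X -> is_MP_inverse (mxconj M) (mxconj X).
Proof.
case=> X1 X2 X3 X4; split; rewrite -!mxconjM ?X1 ?X2 //.
  by rewrite -mxconj_adjoint X3.
by rewrite -mxconj_adjoint X4.
Qed.

Lemma conjc_eq (z : C) : (z^* == z) = (complex.Im z == 0).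
Proof. by case: z => a b; rewrite eq_complex /= eqxx /=; apply/eqP/eqP; lra. Qed.

Lemma matF_realP m n (A : 'M[C]_(m, n)) : matF true A <-> mxconj A = A.
Proof.
split=> [hA|hA i j].
  by apply/matrixP => i j; rewrite mxE; apply/eqP; rewrite conjc_eq; apply/eqP/hA.
by apply/eqP; rewrite -conjc_eq -{2}hA mxE.
Qed.

Lemma vecF_matF realF n (x : 'cV[C]_n) : vecF realF x <-> matF realF x.
Proof. by split=> [hx i j|hx i]; [rewrite (ord1 j); apply: hx | apply: hx]. Qed.

Lemma vecF_add realF n (x y : 'cV[C]_n) :
  vecF realF x -> vecF realF y -> vecF realF (x + y).
Proof. by case: realF => // hx hy i; rewrite /inF mxE ImD hx hy addr0. Qed.

Lemma vecF_scale realF n (t : R) (x : 'cV[C]_n) :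
  vecF realF x -> vecF realF (t%:C *: x).
Proof.
by case: realF => // hx i; move: (hx i); rewrite /inF mxE; case: (x i 0) => a b /= ->; ring.
Qed.

Lemma vecF_opp realF n (x : 'cV[C]_n) : vecF realF x -> vecF realF (- x).
Proof.
by move=> /(vecF_scale (-1)); rewrite rmorphN rmorph1 scaleN1r.
Qed.

Lemma vecF_sub realF n (x y : 'cV[C]_n) :
  vecF realF x -> vecF realF y -> vecF realF (x - y).
Proof. by move=> hx /vecF_opp; apply: vecF_add. Qed.

Lemma vecF_mul realF p q (B : 'M[C]_(p, q)) (x : 'cV[C]_q) :
  matF realF B -> vecF realF x -> vecF realF (B *m x).
Proof.
case: realF => // /matF_realP hB /vecF_matF/matF_realP hx.
by apply/vecF_matF/matF_realP; rewrite mxconjM hB hx.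
Qed.

End Realness.

Section Sparse.
Variable R : realType.
Local Notation C := (complex R).
Local Notation Re := (@complex.Re R).

Lemma cV_coordB n (y z : 'cV[C]_n) i : (y - z) i 0 = y i 0 - z i 0.
Proof. by rewrite !mxE. Qed.

Lemma cV_neq0P n (x : 'cV[C]_n) : x != 0 -> exists j, x j 0 != 0.
Proof.
move=> x0; apply/existsP; apply: contraR x0; rewrite negb_exists => /forallP x0.
by apply/eqP/matrixP => i k; rewrite (ord1 k) mxE; apply/eqP/negPn/x0.
Qed.

Lemma cardvE n (x : 'cV[C]_n) : (cardv x)%:R = \sum_j ((x j 0 != 0)%:R : R).
Proof.
rewrite /cardv -sum1_card natr_sum big_mkcond /=; apply: eq_bigr => i _.
by rewrite inE; case: (x i 0 != 0).
Qed.

Lemma cardvB n (y z : 'cV[C]_n) : (cardv (y - z) <= cardv y + cardv z)%N.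
Proof.
apply: leq_trans (leq_card_setU _ _).1; apply: subset_leq_card.
apply/fintype.subsetP => j; rewrite !inE cV_coordB.
by apply: contraR; rewrite negb_or !negbK => /andP[/eqP -> /eqP ->]; rewrite subrr.
Qed.

Lemma sumr_coord_gt0 n (F : 'I_n -> C -> R) (y z : 'cV[C]_n) :
    (forall j, F j (z j 0) = 0) -> (forall j v, v != z j 0 -> 0 < F j v) ->
  y != z -> 0 < \sum_j F j (y j 0).
Proof.
move=> Fz Fpos; rewrite -subr_eq0 => /cV_neq0P[j]; rewrite cV_coordB subr_eq0 => yzj.
have F_ge0 i : 0 <= F i (y i 0).
  by have [->|/Fpos/ltW] := eqVneq (y i 0) (z i 0); rewrite ?Fz.
rewrite (bigD1 j) //=; apply: ltr_pwDl; first exact: Fpos.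
by apply: sumr_ge0 => i _.
Qed.

Definition unitv n (j : 'I_n) (w : C) : 'cV[C]_n := w *: delta_mx j 0.

Lemma unitvE n (j : 'I_n) w i : unitv j w i 0 = if i == j then w else 0.
Proof. by rewrite !mxE eqxx andbT; case: (i == j); rewrite ?mulr1 ?mulr0. Qed.

Lemma vecF_unitv realF n (j : 'I_n) w : inF realF w -> vecF realF (unitv j w).
Proof. by case: realF => // hw i; rewrite /inF unitvE; case: (i == j). Qed.

Lemma sqnorm2_unitv n (j : 'I_n) w : sqnorm2 (unitv j w) = cabs w ^+ 2.
Proof.
rewrite /sqnorm2 (bigD1 j) //= unitvE eqxx big1 ?addr0 // => i /negbTE ij.
by rewrite unitvE ij cabs0 expr0n.
Qed.

Lemma reip_unitv n (j : 'I_n) w (v : 'cV[C]_n) : reip (unitv j w) v = Re (w^* * v j 0).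
Proof.
rewrite reipE (bigD1 j) //= unitvE eqxx big1 ?addr0 // => i /negbTE ij.
by rewrite unitvE ij rmorph0 mul0r.
Qed.

Lemma cardv_unitv n (j : 'I_n) w : w != 0 -> cardv (unitv j w) = 1%N.
Proof.
move=> w0; rewrite /cardv -(cards1 j); congr #|pred_of_set _|.
by apply/setP => i; rewrite !inE unitvE; case: (i == j); rewrite ?w0 ?eqxx.
Qed.

Lemma sqnorm2_mul_unitv m n (A : 'M[C]_(m, n)) j w : colnorm A <= 1 ->
  sqnorm2 (A *m unitv j w) <= cabs w ^+ 2.
Proof.
move=> A1; rewrite -scalemxAr -colE sqnorm2Z ler_piMr ?sqr_ge0 //.
rewrite -sqr_norm2 expr_le1 ?norm2_ge0 //; apply: le_trans A1.
exact: (le_bigmax (0 : R) (fun j => norm2 (col j A)) j).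
Qed.

Lemma Re_adjoint_coord_le m n (A : 'M[C]_(m, n)) (r : 'cV[C]_m) j w :
  colnorm A <= 1 -> Re (w^* * (adjoint A *m r) j 0) <= cabs w * norm2 r.
Proof.
move=> A1; rewrite -reip_unitv -reip_adjoint.
apply: le_trans (reip_le_norm2 _ _) _; rewrite ler_wpM2r ?norm2_ge0 //.
rewrite -(ler_pXn2r (_ : (0 < 2)%N)) ?nnegrE ?norm2_ge0 ?cabs_ge0 //.
by rewrite sqr_norm2 sqnorm2_mul_unitv.
Qed.

End Sparse.

Section RestrictedIsometry.
Variables (R : realType) (realF : bool) (m n : nat) (A : 'M[complex R]_(m, n)).
Local Notation C := (complex R).

Definition beta_set (k : nat) : set R :=
  [set t : R | exists x : 'cV[C]_n,
     [/\ vecF realF x, x != 0, (cardv x <= k)%N & t = norm2 (A *m x) / norm2 x]].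

Lemma beta_set_lbound k : lbound (beta_set k) 0.
Proof. by move=> _ [x [_ _ _ ->]]; rewrite divr_ge0 ?norm2_ge0. Qed.

Lemma beta_le k x : vecF realF x -> x != 0 -> (cardv x <= k)%N ->
  beta realF A k <= norm2 (A *m x) / norm2 x.
Proof.
move=> Fx x0 xk; apply: ge_inf; first by exists 0; apply: beta_set_lbound.
by exists x.
Qed.

Lemma beta_ge0 k : 0 <= beta realF A k.
Proof.
have [e0|ne] := eqVneq (beta_set k) set0; first by rewrite /beta -/(beta_set k) e0 inf0.
by apply: lb_le_inf; [apply/set0P | apply: beta_set_lbound].
Qed.

Lemma beta_mul_norm2_le k x : vecF realF x -> (cardv x <= k)%N ->
  beta realF A k * norm2 x <= norm2 (A *m x).
Proof.
have [->|x0] := eqVneq x 0; first by rewrite norm20 mulr0 norm2_ge0.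
by move=> Fx xk; rewrite -ler_pdivlMr ?norm2_gt0 // beta_le.
Qed.

Lemma sqr_beta_mul_sqnorm2_le k x : vecF realF x -> (cardv x <= k)%N ->
  beta realF A k ^+ 2 * sqnorm2 x <= sqnorm2 (A *m x).
Proof.
move=> Fx xk; rewrite -!sqr_norm2 -exprMn ler_pXn2r ?nnegrE ?norm2_ge0 //.
  exact: beta_mul_norm2_le.
by rewrite mulr_ge0 ?beta_ge0 ?norm2_ge0.
Qed.

Lemma beta_le_mono k N (x : 'cV[C]_n) :
  (k <= N)%N -> vecF realF x -> x != 0 -> (cardv x <= k)%N ->
  beta realF A N <= beta realF A k.
Proof.
move=> kN Fx x0 xk; apply: lb_le_inf; first by exists (norm2 (A *m x) / norm2 x), x.
by move=> _ [y [Fy y0 yk ->]]; rewrite beta_le // (leq_trans yk).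
Qed.

Lemma beta_le1 k : colnorm A <= 1 -> 0 < beta realF A k -> beta realF A k <= 1.
Proof.
move=> A1 beta_gt0.
have /set0P[_ [x [_ x0 xk _]]] : beta_set k != set0.
  by apply: contraTneq beta_gt0 => e0; rewrite /beta -/(beta_set k) e0 inf0 ltxx.
have [j xj] := cV_neq0P x0.
pose e : 'cV[C]_n := unitv j 1.
have e0 : e != 0.
  by apply: contra_neq (@oner_neq0 C) => /matrixP/(_ j 0); rewrite unitvE eqxx mxE.
have Fe : vecF realF e by apply: vecF_unitv; case: realF.
have ek : (cardv e <= k)%N.
  rewrite cardv_unitv ?oner_neq0 //; apply: leq_trans xk.
  by apply/card_gt0P; exists j; rewrite inE.
apply: le_trans (beta_le Fe e0 ek) _.
rewrite !norm2E sqnorm2_unitv cabs_real normr1 expr1n sqrtr1 divr1 -(sqrtr1 R).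
apply: ler_wsqrtr; apply: le_trans (sqnorm2_mul_unitv j 1 A1) _.
by rewrite cabs_real normr1 expr1n.
Qed.

End RestrictedIsometry.

Section Penalty.
Variable R : rcfType.

Definition q2pen (mu rho : R) : R := mu - Num.max (Num.sqrt mu - rho) 0 ^+ 2.

Lemma q2pen0 mu : 0 <= mu -> q2pen mu 0 = 0.
Proof. by move=> mu0; rewrite /q2pen subr0 max_l ?sqrtr_ge0 // sqr_sqrtr // subrr. Qed.

Lemma q2pen_ge mu rho : Num.sqrt mu <= rho -> q2pen mu rho = mu.
Proof. by move=> h; rewrite /q2pen max_r ?subr_le0 // expr0n subr0. Qed.

Lemma q2pen_le mu rho : rho <= Num.sqrt mu -> q2pen mu rho = mu - (Num.sqrt mu - rho) ^+ 2.
Proof. by move=> h; rewrite /q2pen max_l // subr_ge0. Qed.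

Lemma q2pen_supergrad mu rho rho' :
  q2pen mu rho' <= q2pen mu rho + 2 * Num.max (Num.sqrt mu - rho) 0 * (rho' - rho).
Proof.
rewrite /q2pen; move: (Num.sqrt mu) => s.
have z2 : (0 : R) ^+ 2 = 0 by rewrite expr0n.
case: (lerP rho s) => h1; case: (lerP rho' s) => h2.
- by rewrite !max_l ?subr_ge0 //; have := sqr_ge0 (rho' - rho); nra.
- rewrite (max_r (_ : s - rho' <= 0)) ?subr_le0 ?(ltW h2) // max_l ?subr_ge0 // z2.
  by have := sqr_ge0 (s - rho); nra.
- rewrite max_l ?subr_ge0 // max_r ?subr_le0 ?(ltW h1) // z2.
  by have := sqr_ge0 (s - rho'); nra.
- by rewrite !max_r ?subr_le0 ?(ltW h1) ?(ltW h2) // z2; nra.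
Qed.

End Penalty.

Section PenaltyVectors.
Variable R : realType.
Local Notation C := (complex R).

Lemma Q2cardE n mu (y : 'cV[C]_n) : Q2card mu y = \sum_j q2pen mu (cabs (y j 0)).
Proof. by []. Qed.

Lemma Q2card_segment_le n mu (x y : 'cV[C]_n) (t : R) : 0 <= t <= 1 ->
  Q2card mu (y - t%:C *: (y - x)) - Q2card mu y <=
  t * \sum_j 2 * Num.max (Num.sqrt mu - cabs (y j 0)) 0 * (cabs (x j 0) - cabs (y j 0)).
Proof.
move=> t01; rewrite !Q2cardE -sumrB mulr_sumr; apply: ler_sum => j _.
rewrite !mxE; set g := Num.max _ 0.
have g0 : 0 <= g by rewrite le_max lexx orbT.
have := q2pen_supergrad mu (cabs (y j 0)) (cabs (y j 0 - t%:C * (y j 0 - x j 0))).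
have := cabs_convex (y j 0) (x j 0) t01.
rewrite -/g => yt Q.
have : 2 * g * (cabs (y j 0 - t%:C * (y j 0 - x j 0)) - cabs (y j 0))
    <= 2 * g * (t * (cabs (x j 0) - cabs (y j 0))).
  by rewrite ler_wpM2l ?mulr_ge0 //; lra.
lra.
Qed.

End PenaltyVectors.

Section DataTerm.
Variables (R : realType) (m n : nat) (A : 'M[complex R]_(m, n)) (b : 'cV[complex R]_m).
Variable mu : R.
Local Notation C := (complex R).

Lemma Kreg_segment_concave (y0 d : 'cV[C]_n) (l T : R) : 0 < l < 1 ->
    sqnorm2 (A *m d) <= mu -> Q2card mu y0 = T -> Q2card mu (y0 + d) = mu + T ->
    Q2card mu (y0 + l%:C *: d) = mu * (2 * l - l ^+ 2) + T ->
  (1 - l) * Kreg A b mu y0 + l * Kreg A b mu (y0 + d) <= Kreg A b mu (y0 + l%:C *: d).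
Proof.
move=> /andP[l0 l1] dmu.
have mix (P pq Q k0 k1 kl : R) : Q <= mu -> k0 = T + P ->
    k1 = mu + T + (P + 2 * pq + Q) ->
    kl = mu * (2 * l - l ^+ 2) + T + (P + 2 * l * pq + l ^+ 2 * Q) ->
  (1 - l) * k0 + l * k1 <= kl.
  move=> Qmu -> -> ->; have : 0 <= (l - l ^+ 2) * (mu - Q).
    by rewrite mulr_ge0 // subr_ge0 // expr2 ler_piMl ?(ltW l0) ?(ltW l1).
  nra.
move=> Q0 Q1 Ql; apply: mix dmu _ _ _.
- by rewrite /Kreg sqr_norm2 Q0.
- by rewrite /Kreg sqr_norm2 Q1 mulmxDr [A *m y0 + _ - b]addrAC sqnorm2D.
by rewrite /Kreg sqr_norm2 Ql mulmxDr -scalemxAr [A *m y0 + _ - b]addrAC sqnorm2_DZ.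
Qed.

End DataTerm.

Lemma descent_not_stationary (R : realFieldType) (f : R -> R) (G a c : R) :
    G < 0 -> 0 <= a -> 0 < c ->
    (forall t, 0 < t <= 1 -> f t <= t * G + t ^+ 2 * a) ->
  ~ (forall eps, 0 < eps -> exists2 delta, 0 < delta &
       forall t, 0 < t -> t * c < delta -> - eps <= f t / (t * c)).
Proof.
move=> G0 a0 c0 f_le stat.
have eps0 : 0 < - G / (2 * c) by rewrite divr_gt0 ?oppr_gt0 ?mulr_gt0.
have [delta delta0 f_ge] := stat _ eps0.
(* a step small enough that the quadratic term eats at most half of the slope *)
pose t := Num.min 1 (Num.min (delta / (2 * c)) (- G / (2 * (a + 1)))).
have t0 : 0 < t.
  by rewrite !lt_min ltr01 !divr_gt0 ?oppr_gt0 ?mulr_gt0 //; lra.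
have t1 : t <= 1 by rewrite ge_min lexx.
have tdelta : t * c < delta.
  have : t <= delta / (2 * c) by rewrite /t !ge_min lexx orbT.
  by rewrite ler_pdivlMr ?mulr_gt0 //; lra.
have ta : t * a < - G / 2.
  have : t <= - G / (2 * (a + 1)) by rewrite /t !ge_min lexx !orbT.
  rewrite ler_pdivlMr ?mulr_gt0 //; last lra.
  by move=> h; rewrite ltr_pdivlMr //; nra.
have := f_ge t t0 tdelta; rewrite ler_pdivlMr ?mulr_gt0 //.
have -> : - (- G / (2 * c)) * (t * c) = t * G / 2 by field; lra.
have := f_le t; rewrite t0 t1 => /(_ isT) ftG ftG'.
have : t * (t * a) < t * (- G / 2) by rewrite ltr_pM2l.
have : t ^+ 2 * a = t * (t * a) by rewrite mulrA expr2.
lra.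
Qed.

Section Oracle.
Variables (R : realType) (m n : nat) (A : 'M[complex R]_(m, n)) (S : {set 'I_n}).
Variables (X : 'M[complex R]_n) (b : 'cV[complex R]_m).
Hypothesis hX : is_MP_inverse (adjoint (restrict_cols A S) *m restrict_cols A S) X.
Local Notation AS := (restrict_cols A S).
Local Notation xS := (X *m adjoint AS *m b).

Lemma oracle_notin j : j \notin S -> xS j 0 = 0.
Proof.
move=> jS; rewrite (MP_solution_range hX) mxE big1 // => i _.
by rewrite adjointE mxE (negbTE jS) rmorph0 mul0r.
Qed.

Lemma restrict_cols_mul (v : 'cV[complex R]_n) :
  (forall j, j \notin S -> v j 0 = 0) -> AS *m v = A *m v.
Proof.
move=> vS; apply/matrixP => i k; rewrite !mxE; apply: eq_bigr => j _.
by rewrite mxE (ord1 k); case: ifP => // /negbT/vS ->; rewrite !mulr0.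
Qed.

Lemma oracle_normal_equation j : j \in S -> (adjoint A *m (b - A *m xS)) j 0 = 0.
Proof.
move=> jS.
have -> : (adjoint A *m (b - A *m xS)) j 0 = (adjoint AS *m (b - A *m xS)) j 0.
  by rewrite !mxE; apply: eq_bigr => i _; rewrite !mxE jS.
rewrite -(restrict_cols_mul oracle_notin) mulmxBr [adjoint AS *m (AS *m _)]mulmxA.
by rewrite (MP_normal_equation hX) subrr mxE.
Qed.

Lemma vecF_oracle realF : matF realF A -> vecF realF b -> vecF realF xS.
Proof.
case: realF => FA Fb; last by [].
move: FA Fb => /matF_realP FA /vecF_matF/matF_realP Fb; apply/vecF_matF/matF_realP.
have FAS : mxconj AS = AS.
  apply/matrixP => i j; rewrite !mxE; case: ifP => _; last exact: rmorph0.
  by rewrite -[in RHS]FA mxE.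
have hX' := MP_inverse_mxconj hX.
rewrite mxconjM mxconj_adjoint FAS in hX'.
by rewrite !mxconjM -(MP_inverse_unique (adjoint_gram AS) hX hX') mxconj_adjoint FAS Fb.
Qed.

End Oracle.

Section Main.
Variable R : realType.
Local Notation C := (complex R).
Local Notation Re := (@complex.Re R).
Variables (realF : bool) (m n : nat) (A : 'M[C]_(m, n)) (mu : R) (x0 : 'cV[C]_n).
Variables (eps b : 'cV[C]_m) (N : nat) (X : 'M[C]_n).
Hypotheses (FA : matF realF A) (Fx0 : vecF realF x0) (Feps : vecF realF eps).
Hypotheses (A1 : colnorm A <= 1) (mu_gt0 : 0 < mu) (bE : b = A *m x0 + eps).
Hypotheses (KN2 : (2 * cardv x0 <= N)%N) (beta_gt0 : 0 < beta realF A N).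
Hypothesis eps_small : norm2 eps < beta realF A N ^+ 2 * Num.sqrt mu.
Hypothesis x0_large : forall j, j \in supp x0 ->
  ((beta realF A N ^+ 2)^-1 + 1) * Num.sqrt mu < cabs (x0 j 0).
Hypothesis hX :
  is_MP_inverse (adjoint (restrict_cols A (supp x0)) *m restrict_cols A (supp x0)) X.

Local Notation S := (supp x0).
Local Notation K := (cardv x0).
Local Notation xS := (X *m adjoint (restrict_cols A (supp x0)) *m b).
Local Notation bt := (beta realF A N).
Local Notation sm := (Num.sqrt mu).
Local Notation r := (b - A *m xS).
Local Notation c j := ((adjoint A *m (b - A *m xS)) j 0).

Lemma K_le_N : (K <= N)%N.
Proof. by apply: leq_trans KN2; rewrite leq_pmull. Qed.

Lemma bt_le1 : bt <= 1.
Proof. exact: beta_le1. Qed.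

Lemma sqr_bt_le1 : bt ^+ 2 <= 1.
Proof. by rewrite expr_le1 ?bt_le1 ?(ltW beta_gt0). Qed.

Lemma sm_gt0 : 0 < sm.
Proof. by rewrite sqrtr_gt0. Qed.

Lemma sqr_sm : sm ^+ 2 = mu.
Proof. by rewrite sqr_sqrtr ?(ltW mu_gt0). Qed.

Lemma x0_notin j : j \notin S -> x0 j 0 = 0.
Proof. by rewrite inE negbK => /eqP. Qed.

Lemma vecF_xS : vecF realF xS.
Proof. by apply: vecF_oracle; rewrite // bE; apply: vecF_add => //; apply: vecF_mul. Qed.

Lemma Re_residual_le j w : Re (w^* * c j) <= cabs w * norm2 r.
Proof. exact: Re_adjoint_coord_le. Qed.

Lemma reip_residual (z : 'cV[C]_n) : reip (A *m z) r = \sum_j Re ((z j 0)^* * c j).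
Proof. by rewrite reip_adjoint reipE. Qed.

Lemma data_termE (y : 'cV[C]_n) : A *m y - b = A *m (y - xS) - r.
Proof. by rewrite mulmxBr opprB addrA subrK. Qed.

Local Notation w := (xS - x0).

Lemma oracle_err_notin j : j \notin S -> w j 0 = 0.
Proof. by move=> jS; rewrite cV_coordB oracle_notin // x0_notin // subrr. Qed.

Lemma cardv_oracle_err : (cardv w <= K)%N.
Proof.
apply: subset_leq_card; apply/fintype.subsetP => j; rewrite !inE.
by apply: contraNN => /eqP x0j; rewrite oracle_err_notin ?inE ?x0j ?eqxx.
Qed.

Lemma vecF_oracle_err : vecF realF w.
Proof. exact: vecF_sub vecF_xS Fx0. Qed.

(* the residual is orthogonal to the range of [A_S], which contains [A w] *)
Lemma sqnorm2_noise : sqnorm2 eps = sqnorm2 r + sqnorm2 (A *m w).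
Proof.
have -> : eps = r + A *m w by rewrite bE mulmxBr addrC !addrA subrK addrC addKr.
rewrite sqnorm2D reipC reip_residual big1 ?mulr0 ?addr0 // => j _.
have [jS|jS] := boolP (j \in S); first by rewrite oracle_normal_equation // mulr0.
by rewrite oracle_err_notin // rmorph0 mul0r.
Qed.

Lemma norm2_residual_le : norm2 r <= norm2 eps.
Proof. by rewrite !norm2E ler_wsqrtr // sqnorm2_noise lerDl sqnorm2_ge0. Qed.

Lemma norm2_residual_lt : norm2 r < bt ^+ 2 * sm.
Proof. exact: le_lt_trans norm2_residual_le eps_small. Qed.

Lemma sqnorm2_residual_lt : sqnorm2 r < mu.
Proof.
rewrite -sqr_norm2 -sqr_sm ltr_pXn2r ?nnegrE ?norm2_ge0 ?sqrtr_ge0 //.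
apply: lt_le_trans norm2_residual_lt _; rewrite ler_piMl ?sqrtr_ge0 //.
exact: sqr_bt_le1.
Qed.

Lemma beta_oracle_err_le k : (K <= k)%N ->
  beta realF A k * norm2 w <= norm2 eps.
Proof.
move=> Kk; apply: le_trans (beta_mul_norm2_le _ vecF_oracle_err _) _.
  exact: leq_trans cardv_oracle_err Kk.
by rewrite !norm2E ler_wsqrtr // sqnorm2_noise lerDr sqnorm2_ge0.
Qed.

Lemma norm2_oracle_err_lt : norm2 w < sm.
Proof.
have bw := beta_oracle_err_le K_le_N.
rewrite -(ltr_pM2l beta_gt0); apply: le_lt_trans bw (lt_le_trans eps_small _).
by rewrite expr2 -mulrA ler_pM2l // ler_piMl ?sqrtr_ge0 ?bt_le1.
Qed.

Lemma oracle_large j : j \in S -> sm < bt ^+ 2 * cabs (xS j 0).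
Proof.
move=> jS; have := x0_large jS.
have x0j : cabs (x0 j 0) <= cabs (xS j 0) + cabs (w j 0).
  have -> : x0 j 0 = xS j 0 + - w j 0 by rewrite cV_coordB opprB addrC subrK.
  by rewrite -[cabs (w j 0)]cabsN ler_cabsD.
have wj := le_lt_trans (cabs_le_norm2 w j) norm2_oracle_err_lt.
have bt2 : 0 < bt ^+ 2 by rewrite exprn_gt0.
rewrite mulrDl mul1r -ltrBrDr => h.
rewrite -ltr_pdivrMl // mulrC.
lra.
Qed.

Lemma oracle_gt_sm j : j \in S -> sm < cabs (xS j 0).
Proof.
move=> /oracle_large; move/lt_le_trans; apply.
by rewrite ler_piMl ?cabs_ge0 ?sqr_bt_le1.
Qed.

Lemma oracle_neq0 j : (xS j 0 != 0) = (j \in S).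
Proof.
have [jS|jS] := boolP (j \in S); last by rewrite oracle_notin ?eqxx.
by rewrite -cabs_gt0 (lt_trans sm_gt0) ?oracle_gt_sm.
Qed.

Lemma supp_oracle : supp xS = S.
Proof. by apply/setP => j; rewrite inE oracle_neq0. Qed.

Lemma cardv_oracle : cardv xS = K.
Proof. by rewrite /cardv supp_oracle. Qed.

Lemma oracle_err_le : norm2 w <= norm2 eps / beta realF A K.
Proof.
have [w0|w0] := eqVneq w 0; first by rewrite w0 norm20 divr_ge0 ?norm2_ge0 ?beta_ge0.
have btK : bt <= beta realF A K.
  exact: beta_le_mono K_le_N vecF_oracle_err w0 cardv_oracle_err.
by rewrite ler_pdivlMr ?(lt_le_trans beta_gt0) // mulrC beta_oracle_err_le.
Qed.

Definition Kgap j (v : C) : R :=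
  mu * ((v != 0)%:R - (j \in S)%:R) + bt ^+ 2 * cabs (v - xS j 0) ^+ 2
  - 2 * Re ((v - xS j 0)^* * c j).

Lemma Kgap_oracle j : Kgap j (xS j 0) = 0.
Proof. by rewrite /Kgap oracle_neq0 !subrr cabs0 rmorph0 mul0r; ring. Qed.

Lemma Kgap_gt0 j v : v != xS j 0 -> 0 < Kgap j v.
Proof.
move=> vxS; have bt2 : 0 < bt ^+ 2 by rewrite exprn_gt0.
have sm0 := sm_gt0; have musm : mu = sm * sm by rewrite -expr2 sqr_sm.
rewrite /Kgap; have [jS|jS] := boolP (j \in S).
  rewrite oracle_normal_equation // mulr0 mulr0 subr0 /=.
  have [->|v0] := eqVneq v 0; last first.
    by rewrite /= subrr mulr0 add0r mulr_gt0 ?exprn_gt0 ?cabs_gt0 ?subr_eq0.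
  rewrite /= !sub0r cabsN; have := oracle_large jS; have := oracle_gt_sm jS.
  by move: (cabs _) => s sms smbs; nra.
move: vxS; rewrite oracle_notin // mulr0n !subr0 => v0; rewrite v0 mulr1.
have := Re_residual_le j v; have := norm2_residual_lt; have := sqr_bt_le1.
have : 0 < cabs v by rewrite cabs_gt0.
move: (Re _) (norm2 _) (cabs v) => a e rho rho0 bt21 e_lt a_le.
(* [mu + bt^2 rho^2 - 2 bt^2 sm rho = bt^2 (rho - sm)^2 + mu (1 - bt^2)] *)
have : 0 <= bt ^+ 2 * (rho - sm) ^+ 2 + mu * (1 - bt ^+ 2).
  by apply: addr_ge0; apply: mulr_ge0; rewrite ?sqr_ge0 ?subr_ge0 //; apply: ltW.
have : rho * e < rho * (bt ^+ 2 * sm) by rewrite ltr_pM2l.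
nra.
Qed.

Lemma sum_Kgap (y : 'cV[C]_n) : \sum_j Kgap j (y j 0) =
  mu * (cardv y)%:R - mu * K%:R + bt ^+ 2 * sqnorm2 (y - xS) - 2 * reip (A *m (y - xS)) r.
Proof.
rewrite reip_residual /sqnorm2 !cardvE !mulr_sumr -!sumrB -big_split /= -sumrB.
by apply: eq_bigr => j _; rewrite /Kgap inE cV_coordB; ring.
Qed.

Lemma Kfun_oracle : Kfun A b mu xS = mu * K%:R + sqnorm2 r.
Proof. by rewrite /Kfun cardv_oracle sqr_norm2 -opprB sqnorm2N. Qed.

Lemma KfunE (y : 'cV[C]_n) : Kfun A b mu y = mu * (cardv y)%:R +
  (sqnorm2 (A *m (y - xS)) - 2 * reip (A *m (y - xS)) r + sqnorm2 r).
Proof. by rewrite /Kfun sqr_norm2 data_termE sqnorm2B. Qed.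

Lemma Kfun_oracle_lt (y : 'cV[C]_n) : vecF realF y -> y != xS ->
  Kfun A b mu xS < Kfun A b mu y.
Proof.
move=> Fy yxS; rewrite Kfun_oracle KfunE.
have r_lt := sqnorm2_residual_lt.
have [Ky|yK] := leqP (K.+1) (cardv y).
  have : mu * (K.+1)%:R <= mu * (cardv y)%:R by rewrite ler_pM2l // ler_nat.
  have : 0 <= sqnorm2 (A *m (y - xS)) - 2 * reip (A *m (y - xS)) r + sqnorm2 r.
    by rewrite -sqnorm2B sqnorm2_ge0.
  have : mu * (K.+1)%:R = mu * K%:R + mu by rewrite -addn1 natrD mulrDr mulr1.
  lra.
(* [y - xS] is [2K]-sparse, so the restricted isometry bound applies *)
have yxSN : (cardv (y - xS) <= N)%N.
  apply: leq_trans (cardvB _ _) _; rewrite cardv_oracle; apply: leq_trans KN2.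
  by rewrite mul2n -addnn leq_add2r -ltnS.
have := sqr_beta_mul_sqnorm2_le A (vecF_sub Fy vecF_xS) yxSN.
have := sumr_coord_gt0 Kgap_oracle Kgap_gt0 yxS.
rewrite sum_Kgap; lra.
Qed.

Lemma Kreg_eq_Kfun (y : 'cV[C]_n) : (forall j, y j 0 = 0 \/ sm <= cabs (y j 0)) ->
  Kreg A b mu y = Kfun A b mu y.
Proof.
move=> y0sm; rewrite /Kreg /Kfun Q2cardE cardvE mulr_sumr; congr (_ + _).
apply: eq_bigr => j _; case: (y0sm j) => [->|smy].
  by rewrite cabs0 q2pen0 ?(ltW mu_gt0) ?eqxx ?mulr0.
by rewrite q2pen_ge // -cabs_gt0 (lt_le_trans sm_gt0 smy) mulr1.
Qed.

Lemma Kreg_oracle : Kreg A b mu xS = Kfun A b mu xS.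
Proof.
apply: Kreg_eq_Kfun => j; have [jS|jS] := boolP (j \in S).
  by right; apply/ltW/oracle_gt_sm.
by left; rewrite oracle_notin.
Qed.

Definition mid_coords (y : 'cV[C]_n) : {set 'I_n} :=
  [set j | 0 < cabs (y j 0) < sm].

Section Rounding.
Variables (y : 'cV[C]_n) (j : 'I_n).
Hypotheses (Fy : vecF realF y) (j_mid : j \in mid_coords y).
Local Notation rho := (cabs (y j 0)).
Let l := rho / sm.
Let d := unitv j (y j 0 * (sm / rho)%:C).
Let y0 := y - unitv j (y j 0).
Let y1 := y0 + d.

Lemma rho_mid : 0 < rho < sm.
Proof. by move: j_mid; rewrite inE. Qed.

Lemma round_frac : 0 < l < 1.
Proof.
have /andP[rho0 rho_sm] := rho_mid.
by rewrite divr_gt0 ?sm_gt0 //= ltr_pdivrMr ?sm_gt0 // mul1r.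
Qed.

Lemma cabs_rounded : cabs (y j 0 * (sm / rho)%:C) = sm.
Proof.
have /andP[rho0 _] := rho_mid.
rewrite cabsM cabs_real ger0_norm ?divr_ge0 ?sqrtr_ge0 ?(ltW rho0) //.
by rewrite mulrCA divff ?gt_eqF ?mulr1.
Qed.

Lemma round0E i : y0 i 0 = if i == j then 0 else y i 0.
Proof. by rewrite cV_coordB unitvE; case: eqP => [->|_]; rewrite ?subrr ?subr0. Qed.

Lemma round1E i : y1 i 0 = if i == j then y j 0 * (sm / rho)%:C else y i 0.
Proof. by rewrite mxE round0E unitvE; case: eqP; rewrite ?add0r ?addr0. Qed.

Lemma round_split : y = y0 + l%:C *: d.
Proof.
have /andP[rho0 _] := rho_mid.
apply/matrixP => i k; rewrite (ord1 k) mxE round0E [X in _ + X]mxE unitvE.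
case: eqP => [->|_]; last by rewrite mulr0 addr0.
by rewrite add0r mulrCA -rmorphM /= /l mulrA divfK ?mulfV ?gt_eqF ?sm_gt0 // mulr1.
Qed.

Lemma mid_coords_round0 : mid_coords y0 = mid_coords y :\ j.
Proof.
apply/setP => i; rewrite !inE round0E.
by case: eqP => [->|_] //=; rewrite cabs0 ltxx.
Qed.

Lemma mid_coords_round1 : mid_coords y1 = mid_coords y :\ j.
Proof.
apply/setP => i; rewrite !inE round1E.
by case: eqP => [->|_] //=; rewrite cabs_rounded ltxx andbF.
Qed.

Lemma vecF_round0 : vecF realF y0.
Proof. exact/vecF_sub/vecF_unitv. Qed.

Lemma vecF_round1 : vecF realF y1.
Proof.
apply: vecF_add vecF_round0 (vecF_unitv _ _); move: (Fy j); case: realF => //.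
by rewrite /inF; case: (y j 0) => ? ? /= ->; rewrite mul0r mulr0 addr0.
Qed.

Lemma round1_neq_oracle : y1 != xS.
Proof.
apply/eqP => y1xS; have := round1E j; rewrite y1xS eqxx => /(congr1 (@cabs R)).
rewrite cabs_rounded; have [jS|jS] := boolP (j \in S).
  by move=> smx; have := oracle_gt_sm jS; rewrite smx ltxx.
by rewrite oracle_notin // cabs0 => sm0; have := sm_gt0; rewrite sm0 ltxx.
Qed.

Let T := \sum_(i | i != j) q2pen mu (cabs (y i 0)).

Lemma Q2card_round :
  [/\ Q2card mu y0 = T, Q2card mu y1 = mu + T &
      Q2card mu y = mu * (2 * l - l ^+ 2) + T].
Proof.
have /andP[rho0 rho_sm] := rho_mid.
have offj (z : 'cV[C]_n) : (forall i, i != j -> z i 0 = y i 0) ->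
    Q2card mu z = q2pen mu (cabs (z j 0)) + T.
  move=> zy; rewrite Q2cardE (bigD1 j) //=; congr (_ + _).
  by apply: eq_bigr => i /zy ->.
have round0_off i : i != j -> y0 i 0 = y i 0 by rewrite round0E => /negbTE ->.
have round1_off i : i != j -> y1 i 0 = y i 0 by rewrite round1E => /negbTE ->.
split.
- by rewrite offj // round0E eqxx cabs0 q2pen0 ?(ltW mu_gt0) ?add0r.
- by rewrite offj // round1E eqxx cabs_rounded q2pen_ge.
rewrite offj // q2pen_le ?(ltW rho_sm) //; congr (_ + _).
have l_sm : l * sm = rho by rewrite /l divfK ?gt_eqF ?sm_gt0.
by rewrite -l_sm; move: sqr_sm; move: sm => s <-; ring.
Qed.

Lemma Kreg_round : (1 - l) * Kreg A b mu y0 + l * Kreg A b mu y1 <= Kreg A b mu y.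
Proof.
have [Q0 Q1 Qy] := Q2card_round; rewrite round_split in Qy *.
apply: Kreg_segment_concave Q0 Q1 Qy; first exact: round_frac.
by rewrite -sqr_sm -cabs_rounded sqnorm2_mul_unitv.
Qed.

End Rounding.

Lemma Kreg_oracle_lt (y : 'cV[C]_n) : vecF realF y -> y != xS ->
  Kreg A b mu xS < Kreg A b mu y.
Proof.
have comb (l a a0 a1 ay : R) : 0 < l < 1 -> a <= a0 -> a < a1 ->
    (1 - l) * a0 + l * a1 <= ay -> a < ay.
  move=> /andP[l0 l1] a_a0 a_a1.
  have : 0 <= (1 - l) * (a0 - a) by apply: mulr_ge0; rewrite subr_ge0 // ltW.
  have : 0 < l * (a1 - a) by rewrite mulr_gt0 ?subr_gt0.
  lra.
move Hk: #|mid_coords y| => k; elim: k y Hk => [|k IH] y mid_k Fy yxS.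
  rewrite Kreg_oracle Kreg_eq_Kfun ?Kfun_oracle_lt // => j.
  have : j \notin mid_coords y by rewrite (cards0_eq mid_k) inE.
  rewrite inE negb_and -!leNgt => /orP[yj0|]; last by right.
  by left; apply/eqP; rewrite -cabs_eq0 eq_le yj0 cabs_ge0.
have [j j_mid] : exists j, j \in mid_coords y by apply/card_gt0P; rewrite mid_k.
have card_round : #|mid_coords y :\ j| = k.
  by have := cardsD1 j (mid_coords y); rewrite j_mid mid_k add1n => -[].
have Kreg_round0 : Kreg A b mu xS <= Kreg A b mu (y - unitv j (y j 0)).
  have [<-|y0xS] := eqVneq (y - unitv j (y j 0)) xS; first exact: lexx.
  apply/ltW/IH => //; last exact: vecF_round0.
  by rewrite mid_coords_round0.
apply: comb (round_frac j_mid) Kreg_round0 _ (Kreg_round j_mid).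
apply: IH; first by rewrite mid_coords_round1.
  exact: vecF_round1.
exact: round1_neq_oracle.
Qed.

Definition Kslope j (v : C) : R :=
  2 * Num.max (sm - cabs v) 0 * (cabs (xS j 0) - cabs v)
  + 2 * Re ((v - xS j 0)^* * c j) - 2 * (bt ^+ 2 * cabs (v - xS j 0) ^+ 2).

Lemma Kslope_oracle j : Kslope j (xS j 0) = 0.
Proof. by rewrite /Kslope !subrr cabs0 rmorph0 mul0r expr0n /=; ring. Qed.

Lemma Kslope_lt0_in j v : j \in S -> v != xS j 0 -> Kslope j v < 0.
Proof.
move=> jS vxS; rewrite /Kslope oracle_normal_equation // mulr0 mulr0 addr0.
have bt2 : 0 < bt ^+ 2 by rewrite exprn_gt0.
have z0 : 0 < cabs (v - xS j 0) by rewrite cabs_gt0 subr_eq0.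
have tri : cabs (xS j 0) <= cabs v + cabs (v - xS j 0).
  by have := ler_cabsD v (- (v - xS j 0)); rewrite cabsN opprB addrC subrK.
have := oracle_large jS; have := oracle_gt_sm jS; have := sqr_bt_le1.
have := cabs_ge0 v.
move: (cabs (xS j 0)) (cabs v) (cabs (v - xS j 0)) tri z0.
move=> s rho z tri z0 rho0 bt21 sms smbs.
have [sm_rho|rho_sm] := lerP sm rho.
  by rewrite max_r ?subr_le0 // mulr0 mul0r add0r oppr_lt0 !mulr_gt0 ?exprn_gt0.
rewrite max_l ?subr_ge0 ?(ltW rho_sm) //.
have gap : sm - rho < bt ^+ 2 * (s - rho).
  have : bt ^+ 2 * rho <= rho by rewrite ler_piMl.
  lra.
have : (s - rho) * (sm - rho) < (s - rho) * (bt ^+ 2 * (s - rho)).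
  by rewrite ltr_pM2l; lra.
have : bt ^+ 2 * (s - rho) ^+ 2 <= bt ^+ 2 * z ^+ 2.
  by rewrite ler_pM2l // ler_pXn2r // ?nnegrE; lra.
nra.
Qed.

Lemma Kslope_lt0_notin j v : j \notin S -> v != xS j 0 -> Kslope j v < 0.
Proof.
move=> jS; rewrite /Kslope oracle_notin // !subr0 cabs0 sub0r => v0.
have bt2 : 0 < bt ^+ 2 by rewrite exprn_gt0.
have := Re_residual_le j v; have := norm2_residual_lt; have := sqr_bt_le1.
have : 0 < cabs v by rewrite cabs_gt0.
move: (Re _) (norm2 _) (cabs v) => a e rho rho0 bt21 e_lt a_le.
set g := Num.max (sm - rho) 0.
(* the penalty slope and the curvature together beat the residual *)
have e_g : e < g + bt ^+ 2 * rho.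
  apply: lt_le_trans e_lt _; rewrite /g; have [sm_rho|rho_sm] := lerP sm rho.
    by rewrite max_r ?subr_le0 // add0r ler_pM2l.
  rewrite max_l ?subr_ge0 ?(ltW rho_sm) //.
  have : bt ^+ 2 * (sm - rho) <= sm - rho.
    by rewrite ler_piMl // subr_ge0 (ltW rho_sm).
  lra.
have : rho * e < rho * (g + bt ^+ 2 * rho) by rewrite ltr_pM2l.
have : 0 <= g by rewrite le_max lexx orbT.
nra.
Qed.

Lemma Kslope_lt0 j v : v != xS j 0 -> Kslope j v < 0.
Proof. by have [/Kslope_lt0_in|/Kslope_lt0_notin] := boolP (j \in S); apply. Qed.

Lemma sum_Kslope (y : 'cV[C]_n) : \sum_j Kslope j (y j 0) =
  \sum_j 2 * Num.max (sm - cabs (y j 0)) 0 * (cabs (xS j 0) - cabs (y j 0))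
  + 2 * reip (A *m (y - xS)) r - 2 * (bt ^+ 2 * sqnorm2 (y - xS)).
Proof.
rewrite reip_residual /sqnorm2 !mulr_sumr -!big_split /= -sumrB.
by apply: eq_bigr => j _; rewrite /Kslope cV_coordB.
Qed.

Lemma Kreg_segment_le (y : 'cV[C]_n) (t : R) :
    vecF realF y -> (cardv (y - xS) <= N)%N -> 0 <= t <= 1 ->
  Kreg A b mu (y - t%:C *: (y - xS)) - Kreg A b mu y <=
  t * \sum_j Kslope j (y j 0) + t ^+ 2 * sqnorm2 (A *m (y - xS)).
Proof.
move=> Fy yN t01; have t0 : 0 <= t by case/andP: t01.
have key (q1 q0 sQ sA ir sz sr k1 k0 : R) :
    q1 - q0 <= t * sQ -> bt ^+ 2 * sz <= sA ->
    k1 = q1 + (sr + 2 * - t * (sA - ir) + (- t) ^+ 2 * sA) -> k0 = q0 + sr ->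
  k1 - k0 <= t * (sQ + 2 * ir - 2 * (bt ^+ 2 * sz)) + t ^+ 2 * sA.
  move=> Q btz -> ->; have : t * (bt ^+ 2 * sz) <= t * sA by rewrite ler_wpM2l.
  rewrite sqrrN; lra.
rewrite sum_Kslope; apply: key (Q2card_segment_le mu xS y t01) _ _ _.
- exact: sqr_beta_mul_sqnorm2_le (vecF_sub Fy vecF_xS) yN.
- rewrite /Kreg sqr_norm2.
  have -> : A *m (y - t%:C *: (y - xS)) - b =
      A *m (y - xS) - r + (- t)%:C *: (A *m (y - xS)).
    by rewrite mulmxBr -scalemxAr [in LHS]addrAC data_termE rmorphN scaleNr.
  by rewrite sqnorm2_DZ reipBl reipxx (reipC r).
by rewrite /Kreg sqr_norm2 data_termE.
Qed.

Lemma stationary_Kreg_card (y : 'cV[C]_n) :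
  stationary realF (Kreg A b mu) y -> y <> xS -> (N - K < cardv y)%N.
Proof.
move=> [Fy [_ stat]] /eqP yxS; rewrite ltnNge; apply/negP => yNK.
have yN : (cardv (y - xS) <= N)%N.
  by apply: leq_trans (cardvB _ _) _; rewrite cardv_oracle -(subnK K_le_N) leq_add2r.
have slope_lt0 : \sum_j Kslope j (y j 0) < 0.
  rewrite -oppr_gt0 -sumrN; apply: (sumr_coord_gt0 (F := fun j v => - Kslope j v)) yxS.
    by move=> j; rewrite Kslope_oracle oppr0.
  by move=> j v /Kslope_lt0; rewrite oppr_gt0.
pose f t := Kreg A b mu (y - t%:C *: (y - xS)) - Kreg A b mu y.
apply: (descent_not_stationary (f := f) slope_lt0 (sqnorm2_ge0 (A *m (y - xS))))
  (_ : 0 < norm2 (y - xS)) _ _.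
- by rewrite norm2_gt0 subr_eq0.
- by move=> t /andP[/ltW t0 t1]; apply: Kreg_segment_le; rewrite ?t0.
move=> e e0; have [delta delta0 near] := stat e e0; exists delta => // t t0 t_delta.
have step : norm2 (y - t%:C *: (y - xS) - y) = t * norm2 (y - xS).
  by rewrite addrAC subrr add0r -scaleNr -rmorphN norm2Z normrN ger0_norm ?(ltW t0).
have := near (y - t%:C *: (y - xS)); rewrite step reip0l subr0; apply.
  by apply: vecF_sub Fy (vecF_scale _ (vecF_sub Fy vecF_xS)).
by rewrite t_delta mulr_gt0 ?norm2_gt0 ?subr_eq0.
Qed.

End Main.

Unset Implicit Arguments.

Theorem theorem4p8 (R : realType) (realF : bool) (m n : nat)
  (A : 'M[complex R]_(m, n)) (mu : R) (x0 : 'cV[complex R]_n)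
  (eps : 'cV[complex R]_m) (b : 'cV[complex R]_m) (N : nat)
  (X : 'M[complex R]_n) :
  matF realF A -> vecF realF x0 -> vecF realF eps ->
  colnorm A <= 1 ->
  0 < mu ->
  b = A *m x0 + eps ->
  (2 * cardv x0 <= N)%N ->
  0 < beta realF A N ->
  norm2 eps < beta realF A N ^+ 2 * Num.sqrt mu ->
  (forall j, j \in supp x0 ->
     ((beta realF A N ^+ 2)^-1 + 1) * Num.sqrt mu < cabs (x0 j 0)) ->
  is_MP_inverse (adjoint (restrict_cols A (supp x0)) *m restrict_cols A (supp x0)) X ->
  let x' := X *m adjoint (restrict_cols A (supp x0)) *m b in
  [/\ unique_global_minimizer realF (Kreg A b mu) x',
      unique_global_minimizer realF (Kfun A b mu) x',
      supp x' = supp x0,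
      norm2 (x' - x0) <= norm2 eps / beta realF A (cardv x0) &
      forall x'', stationary realF (Kreg A b mu) x'' -> x'' <> x' ->
        (N - cardv x0 < cardv x'')%N].
Proof.
move=> FA Fx0 Feps A1 mu_gt0 bE KN2 beta_gt0 eps_small x0_large hX x'.
have Fx' : vecF realF x' by apply: (vecF_xS (eps := eps)).
split.
- split=> // y Fy /eqP yx'.
  by apply: (Kreg_oracle_lt (realF := realF) (eps := eps) (N := N)).
- split=> // y Fy /eqP yx'.
  by apply: (Kfun_oracle_lt (realF := realF) (eps := eps) (N := N)).
- by apply: (supp_oracle (realF := realF) (mu := mu) (eps := eps) (N := N)).
- by apply: (oracle_err_le (N := N)).
- by move=> y; apply: (stationary_Kreg_card (eps := eps)).
Qed.
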